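(* Let $\psi$ be a saturation with saturation level $\alpha>0$ and $\mathbf{u}:[0,L]\to\mathbb{R}^P$ a given velocity, and consider the explicit finite-volume scheme for the system $\partial_t\boldsymbol{\rho}+\partial_x(\mathrm{diag}(\boldsymbol{\rho})\psi(\sigma)\mathbf{u})=0$ on $(0,L)$ described in the context. Fix $n$ and suppose $\boldsymbol{\rho}_i^n\ge0$ entry-wise and $\sigma_i^n\le\alpha$ for all $i$. Then $\boldsymbol{\rho}_i^{n+1}\ge0$ entry-wise and $\sigma_i^{n+1}\le\alpha$ for all $i$, provided $$\Delta t\le\frac{\Gamma}{4\|\mathbf{u}\|}\Delta x,\qquad \Gamma=\min\Big\{\frac{2}{\psi(0)},\gamma\Big\},\quad \gamma=\inf_{s\in(0,\alpha)}\frac{\alpha-s}{\alpha\psi(s)},\quad \|\mathbf{u}\|=\max_{i,p}|(\mathbf{u}_{i+1/2})_p|.$$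
   Context: A saturation is a continuous function $\psi:[0,\infty)\to\mathbb{R}$ that is non-increasing and for which there is $\alpha>0$ (the saturation level) with $\psi(\alpha)=0$ and $(\alpha-s)\psi(s)>0$ for $s\neq\alpha$. Discretisation: $\Delta x=L/M$, cells with centres $x_i=\Delta x(i-1/2)$ and interfaces $x_{i+1/2}$, $i=1,\dots,M$; $\boldsymbol{\rho}_i^n\in\mathbb{R}^P$ is the vector of $P$ species densities on cell $i$ at time $t^n=n\Delta t$, and $\sigma_i^n=\sum_{p=1}^P(\boldsymbol{\rho}_i^n)_p$. The scheme is $$\frac{\boldsymbol{\rho}_i^{n+1}-\boldsymbol{\rho}_i^n}{\Delta t}+\frac{\mathbf{F}_{i+1/2}^n-\mathbf{F}_{i-1/2}^n}{\Delta x}=0,\qquad \mathbf{F}_{i+1/2}^n=\mathrm{diag}(\boldsymbol{\rho}_i^E)\psi_{i+1}^W\mathbf{u}_{i+1/2}^++\mathrm{diag}(\boldsymbol{\rho}_{i+1}^W)\psi_i^E\mathbf{u}_{i+1/2}^-,$$ with $\mathbf{F}_{1/2}^n=\mathbf{F}_{M+1/2}^n=0$, $\mathbf{u}_{i+1/2}=\mathbf{u}(x_{i+1/2})$, where $(\cdot)^+=\max\{\cdot,0\}$, $(\cdot)^-=\min\{\cdot,0\}$ entry-wise; $\boldsymbol{\rho}_i^{E}=\boldsymbol{\rho}_i^n+\frac{\Delta x}{2}(\boldsymbol{\rho}_x)_i^n$, $\boldsymbol{\rho}_i^{W}=\boldsymbol{\rho}_i^n-\frac{\Delta x}{2}(\boldsymbol{\rho}_x)_i^n$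 with $(\boldsymbol{\rho}_x)_i^n=\mathrm{minmod}\big(\theta\frac{\boldsymbol{\rho}_{i+1}^n-\boldsymbol{\rho}_i^n}{\Delta x},\frac{\boldsymbol{\rho}_{i+1}^n-\boldsymbol{\rho}_{i-1}^n}{2\Delta x},\theta\frac{\boldsymbol{\rho}_i^n-\boldsymbol{\rho}_{i-1}^n}{\Delta x}\big)$ applied entry-wise; $\psi_i^E=\psi(\sigma_i^E)$, $\psi_i^W=\psi(\sigma_i^W)$ with $\sigma_i^{E}=\sigma_i^n+\frac{\Delta x}{2}(\sigma_x)_i^n$, $\sigma_i^{W}=\sigma_i^n-\frac{\Delta x}{2}(\sigma_x)_i^n$, $(\sigma_x)_i^n=\mathrm{minmod}\big(\theta\frac{\sigma_{i+1}^n-\sigma_i^n}{\Delta x},\frac{\sigma_{i+1}^n-\sigma_{i-1}^n}{2\Delta x},\theta\frac{\sigma_i^n-\sigma_{i-1}^n}{\Delta x}\big)$; $\theta=2$. Here $\mathrm{minmod}(a,b,c)=\min(a,b,c)$ if $a,b,c>0$, $\max(a,b,c)$ if $a,b,c<0$, and $0$ otherwise. The hypotheses on $\boldsymbol{\rho}_i^n$ apply to all values entering the slope computations. *)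

From HB Require Import structures.
From mathcomp Require Import all_boot all_order all_algebra.
From mathcomp Require Import all_classical all_reals all_analysis.
Set Implicit Arguments. Unset Strict Implicit. Unset Printing Implicit Defensive.
Import Order.TTheory GRing.Theory Num.Theory.
Import numFieldNormedType.Exports.
Local Open Scope classical_set_scope.
Local Open Scope ring_scope.

Section Scheme.
Variable R : realType.

Definition saturation (psi : R -> R) (alpha : R) : Prop :=
  [/\ {within `[0, +oo[, continuous psi},
      (forall s t, 0 <= s -> s <= t -> psi t <= psi s),
      0 < alpha, psi alpha = 0 &
      (forall s, 0 <= s -> s != alpha -> 0 < (alpha - s) * psi s)].

Definition minmod (a b c : R) : R :=
  if [&& 0 < a, 0 < b & 0 < c] then Num.min a (Num.min b c)
  else if [&& a < 0, b < 0 & c < 0] then Num.max a (Num.max b c)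
  else 0.

Definition theta : R := 2.

Definition slope (dx : R) (v : nat -> R) (i : nat) : R :=
  minmod (theta * (v i.+1 - v i) / dx) ((v i.+1 - v i.-1) / (2 * dx))
         (theta * (v i - v i.-1) / dx).

Definition recE (dx : R) (v : nat -> R) (i : nat) : R := v i + dx / 2 * slope dx v i.
Definition recW (dx : R) (v : nat -> R) (i : nat) : R := v i - dx / 2 * slope dx v i.

Definition sigma (P : nat) (rho : nat -> 'I_P -> R) (i : nat) : R :=
  \sum_(p < P) rho i p.

Definition posp (x : R) : R := Num.max x 0.
Definition negp (x : R) : R := Num.min x 0.

(* numerical flux F_{i+1/2}, species p; F_{1/2} = F_{M+1/2} = 0 *)
Definition flux (P M : nat) (dx : R) (psi : R -> R) (u : R -> 'I_P -> R)
    (rho : nat -> 'I_P -> R) (i : nat) (p : 'I_P) : R :=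
  if (i == 0)%N || (M <= i)%N then 0 else
  let ui := u (dx * i%:R) p in
  let sg := sigma rho in
  recE dx (fun j => rho j p) i * psi (recW dx sg i.+1) * posp ui
  + recW dx (fun j => rho j p) i.+1 * psi (recE dx sg i) * negp ui.

(* one explicit step: rho_i^{n+1} for cells i = 1..M *)
Definition step (P M : nat) (dx dt : R) (psi : R -> R) (u : R -> 'I_P -> R)
    (rho : nat -> 'I_P -> R) (i : nat) (p : 'I_P) : R :=
  rho i p - dt / dx * (flux M dx psi u rho i p - flux M dx psi u rho i.-1 p).

Definition gammaS (psi : R -> R) (alpha : R) : R :=
  inf [set (alpha - s) / (alpha * psi s) | s in [set s | 0 < s < alpha]].

Definition GammaS (psi : R -> R) (alpha : R) : R :=
  Num.min (2 / psi 0) (gammaS psi alpha).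

(* ||u|| = max over interfaces x_{i+1/2} (i = 0..M) and species of |u_p| *)
Definition unorm (P M : nat) (dx : R) (u : R -> 'I_P -> R) : R :=
  \big[Num.max/0]_(i < M.+1) \big[Num.max/0]_(p < P) `|u (dx * i%:R) p|.

End Scheme.

From HB Require Import structures.
From mathcomp Require Import all_boot all_order all_algebra.
From mathcomp Require Import all_classical all_reals all_analysis.
From mathcomp Require Import ring lra zify.
Set Implicit Arguments. Unset Strict Implicit. Unset Printing Implicit Defensive.
Import Order.TTheory GRing.Theory Num.Theory.
Local Open Scope ring_scope.

(* Both conclusions are one-cell estimates, with lam = dt / dx.  With theta = 2 the
   minmod limiter keeps each reconstructed value between neighbouring cell values, so
   the reconstructed densities are nonnegative with rho^E + rho^W = 2 rho, and
   sigma^E, sigma^W lie in [0, alpha].  Positivity: the outflow of species p is at most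
   lam psi(0) ||u|| (rho^E + rho^W) = 2 lam psi(0) ||u|| rho <= rho, as Gamma <= 2 / psi(0).
   Saturation: summed over species, the inflow through each interface is at most
   2 alpha lam ||u|| psi(s) with s = sigma^E or sigma^W, and by the definition of gamma
   4 lam ||u|| alpha psi(s) <= alpha - s; hence the new total density is at most
   sigma + (alpha - sigma^E) / 2 + (alpha - sigma^W) / 2 = alpha. *)

Section Reconstruction.
Variable R : realType.

Definition between0 (x y : R) := (0 <= x <= y) || (y <= x <= 0).

Lemma between0_0 (y : R) : between0 0 y.
Proof. by rewrite /between0 lexx andbT /= le_total. Qed.

Lemma between0_pM (k x y : R) : 0 <= k -> between0 x y -> between0 (k * x) (k * y).
Proof.
move=> k0 /orP[/andP[x0 xy] | /andP[yx x0]]; apply/orP.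
  by left; rewrite mulr_ge0 // ler_wpM2l.
by right; rewrite mulr_ge0_le0 // ler_wpM2l.
Qed.

Lemma minmod_between (a b c : R) :
  between0 (minmod a b c) a && between0 (minmod a b c) c.
Proof.
rewrite /minmod; case: ifP => [/and3P[a0 b0 c0] | _].
  have ma : Num.min a (Num.min b c) <= a by rewrite ge_min lexx.
  have mc : Num.min a (Num.min b c) <= c by rewrite !ge_min lexx !orbT.
  have m0 : 0 <= Num.min a (Num.min b c) by rewrite !le_min !ltW.
  by rewrite /between0 m0 ma mc.
case: ifP => [/and3P[a0 b0 c0] | _]; last by rewrite !between0_0.
have ma : a <= Num.max a (Num.max b c) by rewrite le_max lexx.
have mc : c <= Num.max a (Num.max b c) by rewrite !le_max lexx !orbT.
have m0 : Num.max a (Num.max b c) <= 0 by rewrite !ge_max !ltW.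
by rewrite /between0 m0 ma mc !orbT.
Qed.

Variables (dx : R) (v : nat -> R) (i : nat).
Hypothesis dx_gt0 : 0 < dx.

Lemma half_slope_between (s := dx / 2 * slope dx v i) :
  between0 s (v i.+1 - v i) && between0 s (v i - v i.-1).
Proof.
have dx2 : 0 <= dx / 2 by rewrite divr_ge0 // ltW.
have /andP[ba bc] := minmod_between (theta R * (v i.+1 - v i) / dx)
  ((v i.+1 - v i.-1) / (2 * dx)) (theta R * (v i - v i.-1) / dx).
have scale d : dx / 2 * (theta R * d / dx) = d by rewrite /theta; field; rewrite gt_eqF.
by move: (between0_pM dx2 ba) (between0_pM dx2 bc); rewrite !scale => -> ->.
Qed.

Lemma recE_add_recW : recE dx v i + recW dx v i = 2 * v i.
Proof. by rewrite /recE /recW; lra. Qed.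

Lemma rec_in_range (lo hi : R) :
  lo <= v i.-1 <= hi -> lo <= v i <= hi -> lo <= v i.+1 <= hi ->
  [/\ lo <= recE dx v i <= hi & lo <= recW dx v i <= hi].
Proof.
rewrite /recE /recW => /andP[? ?] /andP[? ?] /andP[? ?].
have /andP[/orP[]/andP[? ?] /orP[]/andP[? ?]] := half_slope_between.
all: by split; apply/andP; split; lra.
Qed.

Lemma rec_ge0_le2 : 0 <= v i.-1 -> 0 <= v i -> 0 <= v i.+1 ->
  [/\ 0 <= recE dx v i <= 2 * v i & 0 <= recW dx v i <= 2 * v i].
Proof.
move=> h0 h1 h2; have := recE_add_recW.
have [/andP[? _] /andP[? _]] := @rec_in_range 0 (v i.-1 + v i + v i.+1)
  (ltac:(apply/andP; lra)) (ltac:(apply/andP; lra)) (ltac:(apply/andP; lra)).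
by split; apply/andP; split; lra.
Qed.

End Reconstruction.

Lemma posp_bounds (R : realType) (x : R) : 0 <= posp x <= `|x|.
Proof. by rewrite /posp le_max lexx orbT ge_max ler_norm normr_ge0. Qed.

Lemma negp_bounds (R : realType) (x : R) : - `|x| <= negp x <= 0.
Proof. by rewrite /negp ge_min lexx orbT le_min lerNnormlW ?lexx // oppr_le0 normr_ge0. Qed.

Section Saturation.
Variables (R : realType) (psi : R -> R) (alpha : R).
Hypothesis sat : saturation psi alpha.

Lemma saturation_alpha_gt0 : 0 < alpha.
Proof. by case: sat. Qed.

Lemma saturation_psi_gt0 s : 0 <= s < alpha -> 0 < psi s.
Proof.
case: sat => _ _ _ _ sgn /andP[s0 sa].
by have := sgn s s0 (negbT (lt_eqF sa)); rewrite pmulr_rgt0 // subr_gt0.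
Qed.

Lemma saturation_psi0_gt0 : 0 < psi 0.
Proof. by rewrite saturation_psi_gt0 ?lexx ?saturation_alpha_gt0. Qed.

Lemma saturation_psi_ge0 s : 0 <= s <= alpha -> 0 <= psi s.
Proof. by case: sat => _ mono _ psia _ /andP[s0 sa]; rewrite -psia mono. Qed.

Lemma saturation_psi_le_psi0 s : 0 <= s -> psi s <= psi 0.
Proof. by case: sat => _ mono _ _ _ s0; apply: mono. Qed.

Lemma gammaS_psi_le_itvoo s :
  0 < s < alpha -> gammaS psi alpha * (alpha * psi s) <= alpha - s.
Proof.
move=> s_in; have a0 := saturation_alpha_gt0.
have psi_pos t : 0 < t < alpha -> 0 < alpha * psi t.
  by case/andP=> t0 ta; rewrite mulr_gt0 // saturation_psi_gt0 // ltW.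
rewrite -ler_pdivlMr ?psi_pos //; apply: ge_inf; last by exists s.
exists 0 => _ [t t_in <-]; case/andP: (t_in) => _ ta.
by rewrite divr_ge0 ?subr_ge0 ?ltW ?psi_pos.
Qed.

(* The limit s -> 0+ of gammaS_psi_le_itvoo; the only use of the continuity of psi. *)
Lemma gammaS_psi0_le1 : gammaS psi alpha * psi 0 <= 1.
Proof.
set g := gammaS psi alpha; have a0 := saturation_alpha_gt0.
have psi00 := saturation_psi0_gt0.
case: (lerP g 0) => [g0 | g0]; first by rewrite (le_trans (mulr_le0_ge0 g0 (ltW psi00))).
rewrite leNgt; apply/negP => gpsi.
case: sat => /continuous_within_itvcyP[_ cont0] _ _ _ _.
have lt_psi0 : 1 / g < psi 0 by rewrite ltr_pdivrMr // mulrC.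
have near_psi := @cvgr_gt _ _ _ (at_right_proper_filter 0) _ _ cont0 _ lt_psi0.
have [s [[s0 sa] gs]] := filter_ex
  (filterI (filterI (nbhs_right_gt 0) (nbhs_right_lt a0)) near_psi).
have gs' : alpha < g * (alpha * psi s) by rewrite mulrCA ltr_pMr // mulrC -ltr_pdivrMr.
have := @gammaS_psi_le_itvoo s; rewrite s0 sa -/g => /(_ isT); lra.
Qed.

Lemma gammaS_psi_le s :
  0 <= s <= alpha -> gammaS psi alpha * (alpha * psi s) <= alpha - s.
Proof.
move=> /andP[s0 sa]; have a0 := saturation_alpha_gt0.
have [<- | s_neq0] := eqVneq 0 s.
  by rewrite subr0 mulrCA ler_piMr ?gammaS_psi0_le1 // ltW.
have [-> | s_neqa] := eqVneq s alpha.
  by case: sat => _ _ _ -> _; rewrite !mulr0 subrr.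
by apply: gammaS_psi_le_itvoo; rewrite !lt_neqAle s_neq0 s_neqa s0 sa.
Qed.

End Saturation.

Lemma unorm_ge0 (R : realType) (P M : nat) (dx : R) (u : R -> 'I_P -> R) :
  0 <= unorm M dx u.
Proof. by rewrite /unorm; apply: bigmax_ge_id. Qed.

Lemma norm_le_unorm (R : realType) (P M : nat) (dx : R) (u : R -> 'I_P -> R) j p :
  (j <= M)%N -> `|u (dx * j%:R) p| <= unorm M dx u.
Proof.
move=> jM; apply: le_trans (le_bigmax _ _ (Ordinal (jM : (j < M.+1)%N))).
exact: (le_bigmax _ (fun p => `|u (dx * j%:R) p|)).
Qed.

Section Scheme.
Variables (R : realType) (P M : nat) (dx alpha U : R) (psi : R -> R).
Variables (u : R -> 'I_P -> R) (rho : nat -> 'I_P -> R).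
Hypotheses (dx_gt0 : 0 < dx) (sat : saturation psi alpha) (U_ge0 : 0 <= U).
Hypothesis u_le : forall j p, (j <= M)%N -> `|u (dx * j%:R) p| <= U.
Hypothesis rho_ge0 : forall i p, (i <= M.+1)%N -> 0 <= rho i p.
Hypothesis sigma_le : forall i, (i <= M.+1)%N -> sigma rho i <= alpha.

Local Notation F := (flux M dx psi u rho).
Local Notation rhoE p := (recE dx (fun j => rho j p)).
Local Notation rhoW p := (recW dx (fun j => rho j p)).
Local Notation sigE := (recE dx (sigma rho)).
Local Notation sigW := (recW dx (sigma rho)).

Lemma rho_rec_bounds j p : (j <= M)%N ->
  [/\ 0 <= rhoE p j <= 2 * rho j p & 0 <= rhoW p j <= 2 * rho j p].
Proof. by move=> jM; apply: rec_ge0_le2 => //; apply: rho_ge0; lia. Qed.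

Lemma sum_rho_rec_le j : (j <= M)%N ->
  \sum_(p < P) rhoE p j <= 2 * alpha /\ \sum_(p < P) rhoW p j <= 2 * alpha.
Proof.
move=> jM; have sum2 : \sum_(p < P) 2 * rho j p <= 2 * alpha.
  by rewrite -mulr_sumr ler_pM2l // sigma_le //; lia.
by split; apply: le_trans sum2; apply: ler_sum => p _;
  have [/andP[_ ?] /andP[_ ?]] := rho_rec_bounds p jM.
Qed.

Lemma sigma_rec_bounds j : (j <= M)%N ->
  [/\ 0 <= sigE j <= alpha & 0 <= sigW j <= alpha].
Proof.
move=> jM; have sigma_in k : (k <= M.+1)%N -> 0 <= sigma rho k <= alpha.
  by move=> kM; rewrite sigma_le // andbT sumr_ge0 // => p _; apply: rho_ge0.
by apply: rec_in_range => //; apply: sigma_in; lia.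
Qed.

Lemma psi_sigma_rec_bounds j : (j <= M)%N ->
  [/\ 0 <= psi (sigE j) <= psi 0 & 0 <= psi (sigW j) <= psi 0].
Proof.
move=> /sigma_rec_bounds[/andP[E0 Ea] /andP[W0 Wa]].
by rewrite !(saturation_psi_ge0 sat) ?E0 ?Ea ?W0 ?Wa // !(saturation_psi_le_psi0 sat).
Qed.

Lemma flux_interior_bounds j p : (0 < j < M)%N ->
  - (rhoW p j.+1 * psi (sigE j) * U) <= F j p <= rhoE p j * psi (sigW j.+1) * U.
Proof.
move=> /andP[j0 jM]; rewrite /flux (gtn_eqF j0) leqNgt jM /=.
have [/andP[E0 _] _] := rho_rec_bounds p (ltnW jM).
have [_ /andP[W0 _]] := rho_rec_bounds p jM.
have [/andP[psiE0 _] _] := psi_sigma_rec_bounds (ltnW jM).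
have [_ /andP[psiW0 _]] := psi_sigma_rec_bounds jM.
set x := u (dx * j%:R) p; have xU : `|x| <= U by apply: u_le; apply: ltnW.
have /andP[pos0 posx] := posp_bounds x; have /andP[negx neg0] := negp_bounds x.
set a := rhoE p j * _; set b := rhoW p j.+1 * _.
have a0 : 0 <= a by rewrite mulr_ge0.
have b0 : 0 <= b by rewrite mulr_ge0.
have posU : posp x <= U by lra.
have negU : - U <= negp x by lra.
have := ler_wpM2l a0 posU; have := mulr_ge0 a0 pos0.
have := ler_wpM2l b0 negU; have := mulr_ge0_le0 b0 neg0.
by move=> *; apply/andP; split; lra.
Qed.

Lemma flux_boundary j p : (j == 0)%N || (M <= j)%N -> F j p = 0.
Proof. by rewrite /flux => ->. Qed.

Lemma flux_le_psi0 i p : (0 < i <= M)%N -> F i p <= rhoE p i * psi 0 * U.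
Proof.
move=> /andP[i0 iM]; have [/andP[E0 _] _] := rho_rec_bounds p iM.
have [iltM | Mi] := ltnP i M; last first.
  by rewrite flux_boundary ?Mi ?orbT // !mulr_ge0 // ltW ?(saturation_psi0_gt0 sat).
have /andP[_ Fle] := @flux_interior_bounds i p ltac:(lia).
have [_ /andP[_ psiW]] := psi_sigma_rec_bounds iltM.
by apply: le_trans Fle _; rewrite ler_wpM2r // ler_wpM2l.
Qed.

Lemma flux_pred_ge_psi0 i p : (0 < i <= M)%N -> - (rhoW p i * psi 0 * U) <= F i.-1 p.
Proof.
move=> /andP[i0 iM]; have [_ /andP[W0 _]] := rho_rec_bounds p iM.
case: i i0 iM W0 => [//|[|k]] _ kM W0 /=.
  by rewrite flux_boundary // oppr_le0 !mulr_ge0 // ltW ?(saturation_psi0_gt0 sat).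
have /andP[Fge _] := @flux_interior_bounds k.+1 p ltac:(lia).
have [/andP[_ psiE] _] := psi_sigma_rec_bounds (ltnW kM).
by apply: le_trans Fge; rewrite lerN2 ler_wpM2r // ler_wpM2l.
Qed.

Lemma sum_flux_ge i : (0 < i <= M)%N ->
  - (2 * alpha * U * psi (sigE i)) <= \sum_(p < P) F i p.
Proof.
move=> /andP[i0 iM]; have [/andP[psiE0 _] _] := psi_sigma_rec_bounds iM.
have [iltM | Mi] := ltnP i M; last first.
  rewrite big1 => [|p _]; last by rewrite flux_boundary ?Mi ?orbT.
  by rewrite oppr_le0 !mulr_ge0 // ltW ?(saturation_alpha_gt0 sat).
have sumF : \sum_(p < P) - (rhoW p i.+1 * psi (sigE i) * U) <= \sum_(p < P) F i p.
  by apply: ler_sum => p _; have /andP[] := @flux_interior_bounds i p ltac:(lia).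
apply: le_trans sumF.
have [_ sumW] := sum_rho_rec_le iltM.
rewrite sumrN -!mulr_suml lerN2.
have := ler_wpM2r (mulr_ge0 psiE0 U_ge0) sumW; lra.
Qed.

Lemma sum_flux_pred_le i : (0 < i <= M)%N ->
  \sum_(p < P) F i.-1 p <= 2 * alpha * U * psi (sigW i).
Proof.
move=> /andP[i0 iM]; have [_ /andP[psiW0 _]] := psi_sigma_rec_bounds iM.
case: i i0 iM psiW0 => [//|[|k]] _ kM psiW0 /=.
  rewrite big1 => [|p _]; last by rewrite flux_boundary.
  by rewrite !mulr_ge0 // ltW ?(saturation_alpha_gt0 sat).
have sumF : \sum_(p < P) F k.+1 p <= \sum_(p < P) rhoE p k.+1 * psi (sigW k.+2) * U.
  by apply: ler_sum => p _; have /andP[] := @flux_interior_bounds k.+1 p ltac:(lia).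
apply: le_trans sumF _.
have [sumE _] := sum_rho_rec_le (ltnW kM).
rewrite -!mulr_suml.
have := ler_wpM2r (mulr_ge0 psiW0 U_ge0) sumE; lra.
Qed.

Variable dt : R.
Hypotheses (dt_ge0 : 0 <= dt) (cfl : 4 * U * dt <= GammaS psi alpha * dx).
Local Notation lam := (dt / dx).

Lemma cfl_lam : 4 * (lam * U) <= GammaS psi alpha.
Proof.
by rewrite (_ : 4 * (lam * U) = 4 * U * dt / dx) ?ler_pdivrMr //; field; rewrite gt_eqF.
Qed.

Lemma cfl_psi0 : 2 * (lam * U) * psi 0 <= 1.
Proof.
have psi00 := saturation_psi0_gt0 sat.
have : 4 * (lam * U) <= 2 / psi 0 by apply: le_trans cfl_lam _; rewrite /GammaS ge_min lexx.
by rewrite ler_pdivlMr //; lra.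
Qed.

Lemma cfl_gammaS : 4 * (lam * U) <= gammaS psi alpha.
Proof. by apply: le_trans cfl_lam _; rewrite /GammaS ge_min lexx orbT. Qed.

Lemma cfl_flux_le s :
  0 <= s <= alpha -> lam * (2 * alpha * U * psi s) <= (alpha - s) / 2.
Proof.
move=> s_in; have a0 := saturation_alpha_gt0 sat.
have := gammaS_psi_le sat s_in.
have := ler_wpM2r (mulr_ge0 (ltW a0) (saturation_psi_ge0 sat s_in)) cfl_gammaS; lra.
Qed.

Lemma step_ge0 i p : (0 < i <= M)%N -> 0 <= step M dx dt psi u rho i p.
Proof.
move=> i_in; have lam0 : 0 <= lam by rewrite divr_ge0 // ltW.
have rho0 : 0 <= rho i p by apply: rho_ge0; lia.
have := flux_le_psi0 p i_in; have := flux_pred_ge_psi0 p i_in.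
have := recE_add_recW dx (fun j => rho j p) i => /= EW Fpred Fi.
have Fdiff : F i p - F i.-1 p <= (rhoE p i + rhoW p i) * psi 0 * U by lra.
have := ler_wpM2l lam0 Fdiff; have := ler_wpM2l rho0 cfl_psi0.
by rewrite /step EW; lra.
Qed.

Lemma sigma_step i : sigma (step M dx dt psi u rho) i =
  sigma rho i - lam * (\sum_(p < P) F i p - \sum_(p < P) F i.-1 p).
Proof. by rewrite /sigma /step sumrB -mulr_sumr sumrB. Qed.

Lemma sigma_step_le i : (0 < i <= M)%N -> sigma (step M dx dt psi u rho) i <= alpha.
Proof.
move=> i_in; have lam0 : 0 <= lam by rewrite divr_ge0 // ltW.
have [/cfl_flux_le cflE /cfl_flux_le cflW] := sigma_rec_bounds (j := i) ltac:(lia).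
have := ler_wpM2l lam0 (sum_flux_ge i_in); have := ler_wpM2l lam0 (sum_flux_pred_le i_in).
by rewrite sigma_step; have := recE_add_recW dx (sigma rho) i; lra.
Qed.

End Scheme.

Theorem proposition3p3 (R : realType) (P M : nat) (L alpha dt : R)
    (psi : R -> R) (u : R -> 'I_P -> R) (rho : nat -> 'I_P -> R) :
  (0 < M)%N -> 0 < L -> 0 < dt ->
  saturation psi alpha ->
  (forall i p, (i <= M.+1)%N -> 0 <= rho i p) ->
  (forall i, (i <= M.+1)%N -> sigma rho i <= alpha) ->
  4 * unorm M (L / M%:R) u * dt <= GammaS psi alpha * (L / M%:R) ->
  forall i, (1 <= i <= M)%N ->
    (forall p, 0 <= step M (L / M%:R) dt psi u rho i p) /\
    sigma (step M (L / M%:R) dt psi u rho) i <= alpha.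
Proof.
move=> M_gt0 L_gt0 dt_gt0 sat rho_ge0 sigma_le cfl i i_in.
have dx_gt0 : 0 < L / M%:R by rewrite divr_gt0 ?ltr0n.
have u_le := norm_le_unorm (M := M) (L / M%:R) u.
have U_ge0 := unorm_ge0 M (L / M%:R) u.
have dt_ge0 := ltW dt_gt0.
split => [p|].
- exact: (step_ge0 dx_gt0 sat U_ge0 u_le rho_ge0 sigma_le dt_ge0 cfl).
- exact: (sigma_step_le dx_gt0 sat U_ge0 u_le rho_ge0 sigma_le dt_ge0 cfl).
Qed.
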